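(* Let $D$ be a squarefree integer and $p>3$ a prime not dividing $D$. Then the reductions modulo $p$ of the equations $X_0^2-2X_1^2+X_2^2=0$, $X_1^2-2X_2^2+DX_3^2=0$, $X_2^2-2DX_3^2+X_4^2=0$ define a smooth curve over $\mathbb{F}_p$; i.e. $C_D$ has good reduction at $p$ with these equations.
   Context: $C_D\subset\mathbb{P}^4$ is the curve over $\mathbb{Q}$ defined by these three equations. *)

From mathcomp Require Import all_boot all_algebra all_field.
From mathcomp Require Import mpoly.
Set Implicit Arguments. Unset Strict Implicit. Unset Printing Implicit Defensive.
Import GRing.Theory.
Local Open Scope ring_scope.

(* An integer D is squarefree: no square of an integer m > 1 divides it.
   (D = 0 is not squarefree since every m*m divides 0.) *)
Definition squarefree_int (D : int) : Prop :=
  forall m : nat, (m * m %| `|D|)%N -> m = 1%N.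

(* The three quadrics defining C_D in P^4, with coefficients in a ring K
   (D mapped into K via the canonical map Z -> K, i.e. reduced mod char K). *)
Definition CD_eqs (K : comRingType) (D : int) (i : 'I_3) : {mpoly K[5]} :=
  let X := fun j : nat => 'X_(inord j) : {mpoly K[5]} in
  match val i with
  | 0 => X 0 ^+ 2 - 2%:R *: X 1 ^+ 2 + X 2 ^+ 2
  | 1 => X 1 ^+ 2 - 2%:R *: X 2 ^+ 2 + (D%:~R) *: X 3 ^+ 2
  | _ => X 2 ^+ 2 - (2 * D)%:~R *: X 3 ^+ 2 + X 4 ^+ 2
  end.

Definition CD_jacobian (K : comRingType) (D : int) (x : 'I_5 -> K) : 'M[K]_(3, 5) :=
  \matrix_(i < 3, j < 5) ((CD_eqs K D i)^`M(j)).@[x].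

(* The projective scheme in P^4_F_p cut out by the equations is a smooth curve:
   it is a complete intersection of 3 hypersurfaces in P^4, and by the Jacobian
   criterion it is smooth (of dimension 1) iff at every geometric point, i.e.
   every nonzero x over every algebraically closed field of characteristic p
   satisfying the equations, the Jacobian has full rank 3. *)
Definition good_reduction_CD (D : int) (p : nat) : Prop :=
  forall (K : closedFieldType) (x : 'I_5 -> K),
    p \in [pchar K] ->
    (exists j, x j != 0) ->
    (forall i, (CD_eqs K D i).@[x] = 0) ->
    \rank (CD_jacobian D x) = 3%N.

From mathcomp Require Import all_boot all_algebra all_field.
From mathcomp Require Import mpoly ring.
Set Implicit Arguments. Unset Strict Implicit. Unset Printing Implicit Defensive.
Import GRing.Theory.
Local Open Scope ring_scope.

(* A linear relation (a, b, c) among the rows of the Jacobian at a point x of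
   C_D gives a x0 = (b - 2a) x1 = (a - 2b + c) x2 = (b - 2c) D x3 = c x4 = 0.
   Multiplying by the coordinates and using the equations, which express every
   x_i^2 through s = x2^2 and t = D x3^2, yields five relations between
   a, b, c, s, t.  As 2, 3 and D are units mod p, s and t cannot both vanish at
   a nonzero point, and a short case analysis then forces a = b = c = 0. *)

Lemma mderivXU (R : comRingType) (n : nat) (i j : 'I_n) :
  ('X_i : {mpoly R[n]})^`M(j) = (i == j)%:R%:MP.
Proof.
rewrite mderivX mnm1E; case: eqP => [<-|_]; last by rewrite scale0r.
have -> : (U_(i) - U_(i) = 0)%MM by apply/mnmP=> k; rewrite mnmBE subnn mnm0E.
by rewrite mpolyX0 scale1r mpolyC1.
Qed.

Lemma pchar_natr_neq0 (R : nzRingType) (p n : nat) :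
  p \in [pchar R] -> (0 < n < p)%N -> n%:R != 0 :> R.
Proof.
move=> pR /andP[n_gt0 n_lt_p]; rewrite -(dvdn_pcharf pR).
by apply/negP => /(dvdn_leq n_gt0); rewrite leqNgt n_lt_p.
Qed.

Lemma CD_multipliers_eq0 (K : fieldType) (a b c s t : K) :
  (2 : K) != 0 -> (3 : K) != 0 -> (s != 0) || (t != 0) ->
  a * (3 * s - 2 * t) = 0 -> (b - 2 * a) * (2 * s - t) = 0 ->
  (a - 2 * b + c) * s = 0 -> (b - 2 * c) * t = 0 -> c * (2 * t - s) = 0 ->
  [/\ a = 0, b = 0 & c = 0].
Proof.
move=> n2 n3 st_neq0 ea eb es et ec.
have [s0 | s_neq0] := eqVneq s 0.
  move: st_neq0 ea eb et; rewrite s0 eqxx /= => t_neq0 ea eb et.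
  have nt : - t != 0 by rewrite oppr_eq0.
  have a0 : a = 0.
    by apply: (mulIf (mulf_neq0 n2 nt)); rewrite mul0r -[RHS]ea; ring.
  have b0 : b = 0 by apply: (mulIf nt); rewrite mul0r -[RHS]eb a0; ring.
  split=> //; apply: (mulIf (mulf_neq0 n2 nt)); rewrite mul0r -[RHS]et b0; ring.
have c_def : c = 2 * b - a.
  by apply/subr0_eq/(mulIf s_neq0); rewrite mul0r -[RHS]es; ring.
have [t0 | t_neq0] := eqVneq t 0.
  have a0 : a = 0.
    by apply: (mulIf (mulf_neq0 n3 s_neq0)); rewrite mul0r -[RHS]ea t0; ring.
  have b0 : b = 0.
    by apply: (mulIf (mulf_neq0 n2 s_neq0)); rewrite mul0r -[RHS]eb t0 a0; ring.
  by split=> //; rewrite c_def a0 b0; ring.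
have e23 : 2 * a = 3 * b.
  by apply/subr0_eq/(mulIf t_neq0); rewrite mul0r -[RHS]et c_def; ring.
have [b0 | b_neq0] := eqVneq b 0.
  have a0 : a = 0 by apply: (mulfI n2); rewrite e23 b0 !mulr0.
  by split=> //; rewrite c_def a0 b0; ring.
(* With b != 0 both a and b - 2a = -2b are nonzero, forcing 3s = 2t and 2s = t. *)
have a_neq0 : a != 0.
  by apply: contra_neq b_neq0 => a0; apply: (mulfI n3); rewrite -e23 a0 !mulr0.
have e1 : 2 * s - t = 0.
  have m2b_neq0 : - 2 * b != 0 by rewrite mulf_neq0 ?oppr_eq0.
  by apply: (mulfI m2b_neq0); rewrite mulr0 -[RHS]eb e23; congr (_ * _); ring.
have e0 : 3 * s - 2 * t = 0 by apply: (mulfI a_neq0); rewrite mulr0.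
have s_comb : s = 2 * (2 * s - t) - (3 * s - 2 * t) by ring.
by move: s_neq0; rewrite s_comb e1 e0 mulr0 subr0 eqxx.
Qed.

Lemma mul_CD_jacobian (R : comRingType) (D : int) (x : 'I_5 -> R) (v : 'rV[R]_3) :
  let a := v 0 (inord 0) in let b := v 0 (inord 1) in let c := v 0 (inord 2) in
  v *m CD_jacobian D x = 2 *: \row_(j < 5)
    [:: a * x (inord 0); (b - 2 * a) * x (inord 1); (a - 2 * b + c) * x (inord 2);
        (b - 2 * c) * (D%:~R * x (inord 3)); c * x (inord 4)]`_j.
Proof.
move=> a b c; apply/rowP => j; rewrite !mxE !big_ord_recl big_ord0 !mxE /CD_eqs /=.
rewrite !(mderivD, mderivB, mderivN, mderivZ, expr2, mderivM, mderivXU).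
rewrite !(mevalD, mevalB, mevalN, mevalZ, mevalM, mevalC, mevalXU) intrM.
have -> : lift ord0 (lift ord0 ord0) = inord 2 :> 'I_3 by apply: val_inj; rewrite /= inordK.
have -> : lift ord0 ord0 = inord 1 :> 'I_3 by apply: val_inj; rewrite /= inordK.
have -> : ord0 = inord 0 :> 'I_3 by apply: val_inj; rewrite /= inordK.
rewrite -/a -/b -/c -(inord_val j); case: j => k k_lt5 /=.
by do 5?[case: k k_lt5 => [|k] k_lt5]; rewrite -!val_eqE /= !inordK //=; ring.
Qed.

Lemma CD_eqs_solved (R : comRingType) (D : int) (x : 'I_5 -> R) :
  (forall i, (CD_eqs R D i).@[x] = 0) ->
  let s := x (inord 2) ^+ 2 in let t := D%:~R * x (inord 3) ^+ 2 in
  [/\ x (inord 0) ^+ 2 = 3 * s - 2 * t, x (inord 1) ^+ 2 = 2 * s - t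
    & x (inord 4) ^+ 2 = 2 * t - s].
Proof.
move=> Ex s t.
have := Ex ord0; have := Ex (lift ord0 ord0); have := Ex ord_max.
rewrite /CD_eqs /= !(mevalD, mevalB, mevalN, mevalZ, expr2, mevalM, mevalXU).
rewrite intrM -!expr2 => E2 E1 E0.
have Ex1 : x (inord 1) ^+ 2 = 2 * s - t.
  by apply: subr0_eq; rewrite -[RHS]E1 /s /t; ring.
split=> //; apply: subr0_eq; first by rewrite -[RHS]E0 Ex1 /s /t; ring.
by rewrite -[RHS]E2 /s /t; ring.
Qed.

Lemma CD_point_eq0 (K : idomainType) (D : int) (x : 'I_5 -> K) :
  D%:~R != 0 :> K -> (forall i, (CD_eqs K D i).@[x] = 0) ->
  x (inord 2) ^+ 2 = 0 -> D%:~R * x (inord 3) ^+ 2 = 0 -> forall j, x j = 0.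
Proof.
move=> D_neq0 Ex s0 t0; have [] := CD_eqs_solved Ex; rewrite s0 t0 !mulr0 subrr.
have sqr_eq0 (y : K) : y ^+ 2 = 0 -> y = 0 by move/eqP; rewrite expf_eq0 => /andP[_ /eqP].
move=> /sqr_eq0 x0 /sqr_eq0 x1 /sqr_eq0 x4 j.
have x2 := sqr_eq0 _ s0.
have x3 : x (inord 3) = 0 by apply: sqr_eq0; apply: (mulfI D_neq0); rewrite t0 mulr0.
rewrite -(inord_val j); case: j => k k_lt5 /=.
by do 5?[case: k k_lt5 => [|k] k_lt5].
Qed.

Lemma CD_jacobian_kernel (K : fieldType) (D : int) (x : 'I_5 -> K) (v : 'rV[K]_3) :
  (2 : K) != 0 -> (forall i, (CD_eqs K D i).@[x] = 0) -> v *m CD_jacobian D x = 0 ->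
  let a := v 0 (inord 0) in let b := v 0 (inord 1) in let c := v 0 (inord 2) in
  let s := x (inord 2) ^+ 2 in let t := D%:~R * x (inord 3) ^+ 2 in
  [/\ a * (3 * s - 2 * t) = 0, (b - 2 * a) * (2 * s - t) = 0,
      (a - 2 * b + c) * s = 0, (b - 2 * c) * t = 0 & c * (2 * t - s) = 0].
Proof.
move=> n2 Ex vJ0 a b c s t.
move: vJ0; rewrite mul_CD_jacobian => /eqP.
rewrite scaler_eq0 (negPf n2) /= => /eqP/rowP e.
have /= [<- <- <-] := CD_eqs_solved Ex.
have := e (inord 0); have := e (inord 1); have := e (inord 2); have := e (inord 3);
have := e (inord 4); rewrite !mxE /= !inordK //= => e4 e3 e2 e1 e0.
have -> : (b - 2 * c) * t = (b - 2 * c) * (D%:~R * x (inord 3)) * x (inord 3).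
  by rewrite /t; ring.
by rewrite /s e3 !mulrA e0 e1 e2 e4 !mul0r.
Qed.

Theorem lemma4p3 (D : int) (p : nat) :
  squarefree_int D -> prime p -> (3 < p)%N -> ~~ (p %| `|D|)%N ->
  good_reduction_CD D p.
Proof.
move=> _ _ p_gt3 p_ndvd_D K x pK [j xj_neq0] Ex.
have n2 : (2 : K) != 0 by apply: (pchar_natr_neq0 pK); rewrite /= ltnW.
have n3 : (3 : K) != 0 by apply: (pchar_natr_neq0 pK).
have nD : (D%:~R : K) != 0 by rewrite -(dvdz_pcharf pK).
have st_neq0 : (x (inord 2) ^+ 2 != 0) || (D%:~R * x (inord 3) ^+ 2 != 0).
  rewrite -negb_and; apply/negP => /andP[/eqP s0 /eqP t0].
  by move: xj_neq0; rewrite (CD_point_eq0 nD Ex s0 t0) eqxx.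
apply/eqP/inj_row_free => v vJ0.
have [ea eb es et ec] := CD_jacobian_kernel n2 Ex vJ0.
have [a0 b0 c0] := CD_multipliers_eq0 n2 n3 st_neq0 ea eb es et ec.
apply/rowP => i; rewrite mxE -(inord_val i); case: i => k k_lt3.
by do 3?[case: k k_lt3 => [|k] k_lt3].
Qed.
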